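(* Fix the CE group 0 parameters: $\alpha>2$, $\rho,P,\lambda_B,\gamma_{th}>0$, $\sigma^2\ge0$, $a:=\mathcal{A}_0^1\mathcal{R}_0^1\in(0,1]$, $\lambda_0^a>0$, a repetition number $K_0\in\{1,2\}$, and $c=3.575$. Suppose the following: - Each device (the typical device, indexed $m=0$, and each of the $N_0$ intra-cell interfering devices, indexed $m=1,\dots,N_0$) transmits its preamble $K_0$ times. - Repetition $k$ of device $m$ succeeds (event $\theta_k$) iff all 4 of its symbol-group SINRs are $\ge\gamma_{th}$. - For every set of $k$ repetitions, the joint success probability of device $m$ equals the probability of Lemma 2 with $l=4k$. Explicitly, this probability is $q(4k)$, where $$q(l)=\exp\Big(-\frac{l\gamma_{th}\sigma^2}{\rho}-\frac{2\gamma_{th}^{2/\alpha}a\lambda_0^a\gamma\big(2,\pi\lambda_B(P/\rho)^{2/\alpha}\big)}{\lambda_B\big(1-\exp(-\pi\lambda_B(P/\rho)^{2/\alpha})\big)}\mathcal{F}_0(l)\Big),\qquad \mathcal{F}_0(l)=\int_{\gamma_{th}^{-1/\alpha}}^{\infty}\Big[1-\Big(\frac{1}{1+y^{-\alpha}}\Big)^{l}\Big]y\,dy.$$ - The number $N_0$ of intra-cell interferers has PMF $$\mathbb{P}[N_0=n]=\frac{c^{c+1}\Gamma(n+c+1)(a\lambda_0^a/\lambda_B)^n}{\Gamma(c+1)\Gamma(n+1)(a\lambda_0^a/\lambda_B+c)^{n+c+1}}.$$ Define the preamble transmission success probability of device $m$ as $\mathbb{P}_{S,0,m}[K_0]=\mathbb{P}\big[\bigcup_{k=1}^{K_0}\theta_k\big]$.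 Define the RACH success probability as $$\mathcal{P}_0^1=\sum_{n=0}^{\infty}\mathbb{P}[N_0=n]\,\mathbb{P}_{S,0,0}[K_0]\prod_{m=1}^{n}\big(1-\mathbb{P}_{S,0,m}[K_0]\big).$$ Then $$\mathcal{P}_0^1=\sum_{n=0}^{\infty}\mathbb{P}[N_0=n]\,\Theta_0\,(1-\Theta_0)^{n},\qquad\Theta_0=\sum_{k=1}^{K_0}(-1)^{k+1}\binom{K_0}{k}q(4k).$$
   Context: This is the random access (RACH) model for CE group 0 in an NB-IoT network in the first time slot; group-0 devices use path-loss inversion power control with target $\rho$. The RACH attempt of the typical device succeeds iff its preamble is successfully received in at least one repetition and no intra-cell device using the same preamble is also successfully received (no collision). - Base stations form a PPP of intensity $\lambda_B$. - $\lambda_0^a=\lambda_0/S_0$ is the intensity of group-0 devices choosing a given preamble among $S_0$ preambles. - $\mathcal{A}_0^1$ is the probability that a device's buffer is non-empty, and $\mathcal{R}_0^1$ the probability that it is not restricted by the access scheme. - $\gamma(a,b)$ is the lower incomplete gamma function. *)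

From HB Require Import structures.
From mathcomp Require Import all_boot all_order all_algebra.
From mathcomp Require Import all_classical all_reals all_analysis.
Set Implicit Arguments. Unset Strict Implicit. Unset Printing Implicit Defensive.
Import Order.TTheory GRing.Theory Num.Theory.
Local Open Scope classical_set_scope.
Local Open Scope ring_scope.

Section defs.
Variable R : realType.

Definition Gammaf (x : R) : R :=
  fine (\int[@lebesgue_measure R]_(t in `[0%R, +oo[%classic)
          ((t `^ (x - 1)) * expR (- t))%:E)%E.

(* lower incomplete gamma: gamma(s,b) = int_0^b t^(s-1) e^(-t) dt *)
Definition lgamma (s b : R) : R :=
  fine (\int[@lebesgue_measure R]_(t in `[0%R, b]%classic)
          ((t `^ (s - 1)) * expR (- t))%:E)%E.

Definition F0 (alpha gth : R) (l : nat) : R :=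
  fine (\int[@lebesgue_measure R]_(y in `[(gth `^ (- alpha^-1))%R, +oo[%classic)
          ((1 - (1 / (1 + y `^ (- alpha))) ^+ l) * y)%:E)%E.

Definition qL (alpha rho Pw lamB gth sigma2 a lam0a : R) (l : nat) : R :=
  let u := pi * lamB * (Pw / rho) `^ (2 / alpha) in
  expR (- (l%:R * gth * sigma2 / rho)
        - (2 * gth `^ (2 / alpha) * a * lam0a * lgamma 2 u)
          / (lamB * (1 - expR (- u))) * F0 alpha gth l).

Definition cst : R := 3575%:R / 1000%:R.

Definition pmfN0 (a lam0a lamB : R) (n : nat) : R :=
  let c := cst in
  let r := a * lam0a / lamB in
  (c `^ (c + 1) * Gammaf (n%:R + c + 1) * r ^+ n)
  / (Gammaf (c + 1) * Gammaf (n%:R + 1) * (r + c) `^ (n%:R + c + 1)).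

End defs.

From HB Require Import structures.
From mathcomp Require Import all_boot all_order all_algebra.
From mathcomp Require Import all_classical all_reals all_analysis.
Import Order.TTheory GRing.Theory Num.Theory numFieldNormedType.Exports.
Local Open Scope classical_set_scope.
Local Open Scope ring_scope.

(* Each device succeeds with the same probability Theta0, computed by
   inclusion-exclusion over its K0 <= 2 repetitions from the joint success
   probabilities q(4k), which depend only on the number k of repetitions.
   Hence every factor P_{S,0,m}[K0] of the RACH series equals Theta0 and the
   product over the n interferers collapses to (1 - Theta0)^n. *)

Section ExchangeableUnion.
Context {R : realType} {d : measure_display} {T : measurableType d}.
Variable P : probability T R.

Definition all_events {K} (E : 'I_K -> set T) (S : {set 'I_K}) : set T :=
  [set x | forall k, k \in S -> E k x].

Definition any_event {K} (E : 'I_K -> set T) : set T := [set x | exists k, E k x].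

Definition exchangeable_with {K} (E : 'I_K -> set T) (f : nat -> R) :=
  forall S : {set 'I_K}, S != finset.set0 -> P (all_events E S) = (f #|S|)%:E.

Lemma all_events1 K (E : 'I_K -> set T) k : all_events E [set k] = E k.
Proof.
apply/seteqP; split => x /=; first by apply; rewrite inE.
by move=> Ex j; rewrite inE => /eqP ->.
Qed.

Lemma prob_event_exchangeable {K} {E : 'I_K -> set T} {f} k :
  exchangeable_with E f -> P (E k) = (f 1%N)%:E.
Proof.
move=> PE; rewrite -all_events1 PE ?cards1 //.
by apply/set0Pn; exists k; rewrite inE.
Qed.

Lemma any_event1 (E : 'I_1 -> set T) : any_event E = E ord0.
Proof.
apply/seteqP; split => x /=; last by exists ord0.
by case=> k; rewrite (ord1 k).
Qed.

Lemma ord2P (k : 'I_2) : k = ord0 \/ k = ord_max.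
Proof. by case: k => -[|[|//]] lt_k2; [left | right]; apply: val_inj. Qed.

Lemma any_event2 (E : 'I_2 -> set T) : any_event E = E ord0 `|` E ord_max.
Proof.
apply/seteqP; split => x /=; last by case=> Ex; eexists; exact: Ex.
by case=> k; case: (ord2P k) => ->; [left | right].
Qed.

Lemma all_events2 (E : 'I_2 -> set T) :
  all_events E [set: 'I_2] = E ord0 `&` E ord_max.
Proof.
apply/seteqP; split => x /=; first by move=> Ex; split; apply: Ex.
by case=> E0x E1x k _; case: (ord2P k) => ->.
Qed.

Lemma prob_any_event1 {E : 'I_1 -> set T} {f} :
  exchangeable_with E f -> fine (P (any_event E)) = f 1%N.
Proof. by move=> PE; rewrite any_event1 (prob_event_exchangeable _ PE). Qed.

Lemma prob_any_event2 {E : 'I_2 -> set T} {f} :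
  (forall k, measurable (E k)) -> exchangeable_with E f ->
  fine (P (any_event E)) = 2 * f 1%N - f 2%N.
Proof.
move=> mE PE.
have PU : P (E ord0 `|` E ord_max) =
          (P (E ord0) + P (E ord_max) - P (E ord0 `&` E ord_max))%E.
  apply: measureUfinl => //.
  by rewrite (le_lt_trans (probability_le1 _ (mE _))) ?ltry.
rewrite any_event2 PU -all_events2 PE ?cardsT ?card_ord; last first.
  by apply/set0Pn; exists ord0; rewrite inE.
by rewrite !(prob_event_exchangeable _ PE) /= mulr2n mulrDl mul1r.
Qed.

Lemma prob_any_event_exchangeable {K} {E : 'I_K -> set T} f :
  (K = 1 \/ K = 2)%N -> (forall k, measurable (E k)) -> exchangeable_with E f ->
  fine (P (any_event E)) = \sum_(1 <= k < K.+1) (-1) ^+ k.+1 * 'C(K, k)%:R * f k.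
Proof.
case=> ?; subst K => mE PE.
  by rewrite (prob_any_event1 PE) big_nat1 sqrrN expr1n !mul1r.
rewrite (prob_any_event2 mE PE) big_nat_recr //= big_nat1.
by rewrite !exprS expr0 !mulr1 !mulN1r opprK !mul1r mulN1r.
Qed.

End ExchangeableUnion.

Theorem theorem1 (R : realType) (alpha rho Pw lamB gth sigma2 a lam0a : R)
  (K0 : nat) (d : measure_display) (T : measurableType d)
  (P : probability T R) (theta : nat -> 'I_K0 -> set T) :
  2 < alpha -> 0 < rho -> 0 < Pw -> 0 < lamB -> 0 < gth -> 0 <= sigma2 ->
  0 < a <= 1 -> 0 < lam0a -> (K0 = 1 \/ K0 = 2)%N ->
  (forall m k, measurable (theta m k)) ->
  (forall (m : nat) (S : {set 'I_K0}), S != finset.set0 ->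
     P [set x | forall k : 'I_K0, k \in S -> theta m k x] =
     (qL alpha rho Pw lamB gth sigma2 a lam0a (4 * #|S|))%:E) ->
  let PS := fun m : nat => fine (P [set x | exists k : 'I_K0, theta m k x]) in
  let Theta0 : R := \sum_(1 <= k < K0.+1)
      (-1) ^+ k.+1 * 'C(K0, k)%:R * qL alpha rho Pw lamB gth sigma2 a lam0a (4 * k) in
  limn (series (fun n : nat => (pmfN0 a lam0a lamB n * PS 0%N *
                          \prod_(1 <= m < n.+1) (1 - PS m) : R)))
  = limn (series (fun n : nat => (pmfN0 a lam0a lamB n * Theta0 * (1 - Theta0) ^+ n : R))).
Proof.
move=> _ _ _ _ _ _ _ _ K0_12 mtheta Ptheta PS Theta0.
have PS_Theta0 m : PS m = Theta0.
  apply: (prob_any_event_exchangeable P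
            (fun k => qL alpha rho Pw lamB gth sigma2 a lam0a (4 * k))) => //.
  exact: Ptheta.
congr (limn (series _)); apply/funext => n.
rewrite PS_Theta0; under eq_bigr do rewrite PS_Theta0.
by rewrite prodr_const_nat subSS subn0.
Qed.
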